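(* Let $(\mathcal{X},\mathcal{F})$ be a measurable space, $\bar p$ a probability measure on $\mathcal{X}$, $r:\mathcal{X}\to\mathbb{R}$ a measurable reward function, $M\ge 1$ an integer and $\alpha\in(0,\infty)$. Let $X^{(1)},\dots,X^{(M)}$ be i.i.d. with law $\bar p$, set $R_i:=r(X^{(i)})$, let $\hat P_X:=\frac1M\sum_{i=1}^M\delta_{X^{(i)}}$ be their empirical distribution and $\hat F_R(u):=\frac1M\#\{i: R_i\le u\}$ the empirical CDF of the rewards. Let $A:\mathbb{R}\times[0,1]\times\mathcal{X}\times\mathcal{P}(\mathcal{X})\to[0,1]$ be a measurable acceptance function which is coordinatewise nondecreasing in its first two arguments. Put $p_i:=A(R_i,\hat F_R(R_i),X^{(i)},\hat P_X)$ and let $C_1,\dots,C_M$ be $\{0,1\}$-valued random variables (not necessarily independent of one another) with $\mathbb{P}(C_i=1\mid X^{(1)},\dots,X^{(M)})=p_i$ for each $i$. Let the accepted set be $\mathcal{A}:=\{X^{(i)}: C_i=1\}$ and assume $\mathbb{P}(X^{(1)}\in\mathcal{A})>0$. Define $$g(x):=\mathbb{E}\big[A(r(x),\hat F_R(r(x)),x,\hat P_X)\,\big|\,X^{(1)}=x\big],\qquad \frac{\hat r(x)}{\alpha}:=\log g(x)\in[-\infty,0],$$ where the expectation is over $X^{(2)},\dots,X^{(M)}$ (i.e. over the randomness of $\hat F_R,\hat P_X$ given $X^{(1)}=x$). Then the conditional law of $X^{(1)}$ given $X^{(1)}\in\mathcal{A}$ has density $g/\int g\,d\bar p$ with respect to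 $\bar p$, i.e. it is proportional to $\exp(\hat r(x)/\alpha)\,\bar p(dx)$; equivalently, it is the solution of the KL-regularized (PPO) problem $$\operatorname*{argmax}_{\hat p}\Big[\mathbb{E}_{x\sim\hat p}\,\hat r(x)-\alpha\,\mathsf{KL}(\hat p\,\|\,\bar p)\Big].$$
   Context: $\mathcal{P}(\mathcal{X})$ denotes the set of probability measures on $\mathcal{X}$. For a reward $\rho$ and reference $\bar p$, the maximizer over probability measures $p$ of $\mathbb{E}_{X\sim p}[\rho(X)]-\alpha\mathsf{KL}(p\|\bar p)$ is the measure $p(dx)\propto\exp(\rho(x)/\alpha)\bar p(dx)$. The sampling scheme described (accepting $X^{(i)}$ iff $C_i=1$) is called Generalized Rejection Sampling (GRS). *)

From HB Require Import structures.
From mathcomp Require Import all_boot all_order all_algebra.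
From mathcomp Require Import all_classical all_reals all_analysis.
Set Implicit Arguments. Unset Strict Implicit. Unset Printing Implicit Defensive.
Import Order.TTheory GRing.Theory Num.Theory.
Local Open Scope classical_set_scope.
Local Open Scope ring_scope.

Section defs.
Context (d : measure_display) (T : measurableType d) (R : realType).

(* Empirical distribution (1/M) sum_i delta_{xs i} of a sample xs of size
   M = n.+1, as a probability measure: the normalization of the finite sum of
   Dirac masses (its total mass is M, finite and nonzero, so the default
   argument of mnormalize is never used). *)
Definition empirical (n : nat) (xs : 'I_n.+1 -> T) : probability T R :=
  mnormalize (msum (fun k : nat => (\d_(xs (inord k)) : {measure set T -> \bar R}))
                   n.+1)
             (\d_(xs ord0)).

Definition emp_cdf (n : nat) (r : T -> R) (xs : 'I_n.+1 -> T) (u : R) : R :=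
  (#|[set i : 'I_n.+1 | r (xs i) <= u]|%:R / n.+1%:R).

Definition accept_prob (n : nat) (r : T -> R)
    (A : R -> R -> T -> pprobability T R -> R) (xs : 'I_n.+1 -> T) (x : T) : R :=
  A (r x) (emp_cdf r xs (r x)) x (empirical xs).

Definition iid_with_law d' (Omega : measurableType d') (n : nat)
    (P : probability Omega R) (X : 'I_n.+1 -> Omega -> T) (pbar : probability T R) :=
  (forall i, measurable_fun setT (X i)) /\
  forall B : 'I_n.+1 -> set T, (forall i, measurable (B i)) ->
    P (\bigcap_(i in [set: 'I_n.+1]) (X i @^-1` B i)) =
    (\prod_(i < n.+1) pbar (B i))%E.

Definition sigmaX d' (Omega : measurableType d') (n : nat)
    (X : 'I_n.+1 -> Omega -> T) : set (set Omega) :=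
  <<s \bigcup_(i in [set: 'I_n.+1]) preimage_set_system setT (X i) measurable >>.

Definition sample_with_first d' (Omega : measurableType d') (n : nat)
    (X : 'I_n.+1 -> Omega -> T) (x : T) (w : Omega) : 'I_n.+1 -> T :=
  fun i => if i == ord0 then x else X i w.

Definition gfun d' (Omega : measurableType d') (n : nat) (P : probability Omega R)
    (X : 'I_n.+1 -> Omega -> T) (r : T -> R)
    (A : R -> R -> T -> pprobability T R -> R) (x : T) : \bar R :=
  (\int[P]_w (accept_prob r A (sample_with_first X x w) x)%:E)%E.

End defs.

From HB Require Import structures.
From mathcomp Require Import all_boot all_order all_algebra.
From mathcomp Require Import all_classical all_reals all_analysis.
From mathcomp Require Import measurable_realfun.
Set Implicit Arguments. Unset Strict Implicit. Unset Printing Implicit Defensive.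
Import Order.TTheory GRing.Theory Num.Theory.
Local Open Scope classical_set_scope.
Local Open Scope ring_scope.

(* On sigma(X^(1), ..., X^(M)) the event {C_1 = 1} has density
   p_1 = A(R_1, F_R(R_1), X^(1), P_X) with respect to P, and p_1 is a measurable
   function of the pair (X^(1), (X^(2), ..., X^(M))).  By independence, whose
   product rule on boxes extends to all measurable sets of tuples, this pair has
   law pbar \x law(X^(2), ..., X^(M)); Tonelli then turns
   P(X^(1) \in B, C_1 = 1) into the integral of g over B.  Taking B = setT gives
   the normalising constant. *)

Section empirical_statistics.
Context (R : realType) (d : measure_display) (T : measurableType d) (n : nat).

Lemma emp_cdfE (r : T -> R) (xs : 'I_n.+1 -> T) (u : R) :
  emp_cdf r xs u = (\sum_(i < n.+1) (if r (xs i) <= u then 1 else 0)) / n.+1%:R.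
Proof.
rewrite /emp_cdf -sum1_card natr_sum big_mkcond /=; congr (_ / _).
apply: eq_bigr => i _; congr (if _ then _ else _).
by apply/idP/idP => [/set_mem|/mem_set].
Qed.

Lemma empiricalE (xs : 'I_n.+1 -> T) (V : set T) :
  empirical R xs V = ((\sum_(k < n.+1) \d_(xs (inord k)) V) * (n.+1%:R^-1)%:E)%E.
Proof.
have msumT : msum (fun k : nat => (\d_(xs (inord k)) : {measure set T -> \bar R}))
    n.+1 setT = n.+1%:R%:E.
  by rewrite /msum /=; under eq_bigr do rewrite diracT; rewrite sumEFin sumr_const card_ord.
by rewrite /empirical /= /mnormalize /= msumT eqe pnatr_eq0.
Qed.

Context (dU : measure_display) (U : measurableType dU) (xs : U -> 'I_n.+1 -> T).
Hypothesis mxs : forall i, measurable_fun setT (xs ^~ i).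

Lemma measurable_emp_cdf (r : T -> R) (f : U -> R) :
  measurable_fun setT r -> measurable_fun setT f ->
  measurable_fun setT (fun u => emp_cdf r (xs u) (f u)).
Proof.
move=> mr mf; under eq_fun do rewrite emp_cdfE.
apply: measurable_funM => //; apply: measurable_sum => i.
apply: measurable_fun_ifT => //.
exact: measurable_fun_ler (measurableT_comp mr (mxs i)) mf.
Qed.

Lemma measurable_empirical :
  measurable_fun setT (fun u => (empirical R (xs u) : pprobability T R)).
Proof.
apply: (measurability (@pset _ _ _ : set (set (pprobability T R)))) => //.
move=> _ [_ [s _] [V mV <-]] <-; rewrite /mset /preimage /=.
apply: emeasurable_fun_infty_o => //.
under eq_fun do rewrite empiricalE.
apply: emeasurable_funM => //; apply: emeasurable_sum => k.
under eq_fun do rewrite diracE.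
apply/measurable_EFinP.
exact: measurableT_comp (measurable_indic (R := R) mV) (mxs (inord k)).
Qed.

Lemma measurable_accept_prob (r : T -> R)
    (A : R -> R -> T -> pprobability T R -> R) (x : U -> T) :
  measurable_fun setT r ->
  measurable_fun setT
    (fun z : R * R * T * pprobability T R => A z.1.1.1 z.1.1.2 z.1.2 z.2) ->
  measurable_fun setT x ->
  measurable_fun setT (fun u => accept_prob r A (xs u) (x u)).
Proof.
move=> mr mA mx.
have -> : (fun u => accept_prob r A (xs u) (x u)) =
    (fun z : R * R * T * pprobability T R => A z.1.1.1 z.1.1.2 z.1.2 z.2) \o
    (fun u => (r (x u), emp_cdf r (xs u) (r (x u)), x u,
               (empirical R (xs u) : pprobability T R))) by [].
apply: measurableT_comp mA _.
have mrx := measurableT_comp mr mx.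
apply: measurable_fun_pair; last exact: measurable_empirical.
apply: measurable_fun_pair => //; apply: measurable_fun_pair => //.
exact: measurable_emp_cdf.
Qed.

End empirical_statistics.

Section tuple_boxes.
Context (d : measure_display) (T : measurableType d) (n : nat).

Definition tuple_boxes : set (set (n.-tuple T)) :=
  [set D | exists B : 'I_n -> set T, (forall i, measurable (B i)) /\
     D = \bigcap_(i in [set: 'I_n]) ((fun s => tnth s i) @^-1` B i)].

Lemma measurable_tuple_box D : tuple_boxes D -> measurable D.
Proof.
move=> [B [mB ->]]; apply: fin_bigcap_measurable; first exact: finite_finset.
by move=> i _; rewrite -[X in measurable X]setTI; exact: measurable_tnth.
Qed.

Lemma tuple_boxes_setI_closed : setI_closed tuple_boxes.
Proof.
move=> _ _ [B1 [mB1 ->]] [B2 [mB2 ->]]; exists (fun i => B1 i `&` B2 i); split.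
  by move=> i; apply: measurableI.
apply/seteqP; split => s /=.
  by move=> [s1 s2] i _; split; [exact: s1|exact: s2].
by move=> s12; split => i _; have [] := s12 i I.
Qed.

Lemma tuple_boxesT : tuple_boxes setT.
Proof. by exists (fun _ => setT); split => //; apply/seteqP; split. Qed.

Lemma g_sigma_tuple_boxes : @measurable _ (n.-tuple T) = <<s tuple_boxes >>.
Proof.
apply/seteqP; split; last first.
  by apply: smallest_sub; [exact: sigma_algebra_measurable|exact: measurable_tuple_box].
change (g_sigma_preimage (fun i (s : n.-tuple T) => tnth s i) `<=` <<s tuple_boxes >>).
apply: smallest_sub; first exact: smallest_sigma_algebra.
rewrite -bigcup_seq => _ [i _ [V mV <-]]; apply: sub_gen_smallest.
exists (fun j => if j == i then V else setT); split; first by move=> j; case: ifPn.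
apply/seteqP; split => s /=.
  by move=> [_ Vs] j _; case: ifPn => // /eqP ->.
by move=> Bs; split => //; have := Bs i I; rewrite eqxx.
Qed.

End tuple_boxes.

Lemma sigmaX_preimage d (T : measurableType d) dO (Omega : measurableType dO)
    (n : nat) (X : 'I_n.+1 -> Omega -> T) (i : 'I_n.+1) (B : set T) :
  measurable B -> sigmaX X (X i @^-1` B).
Proof. by move=> mB; apply: sub_gen_smallest; exists i => //; exists B; rewrite ?setTI. Qed.

Lemma sample_with_first_head d (T : measurableType d) dO
    (Omega : measurableType dO) (n : nat) (X : 'I_n.+1 -> Omega -> T) (w : Omega) :
  sample_with_first X (X ord0 w) w = X ^~ w.
Proof. by apply/funext => j; rewrite /sample_with_first; case: eqP => [->|]. Qed.

Section head_tail_independence.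
Context (R : realType) (d : measure_display) (T : measurableType d)
  (pbar : probability T R) (n : nat)
  (dO : measure_display) (Omega : measurableType dO) (P : probability Omega R)
  (X : 'I_n.+1 -> Omega -> T).
Hypothesis iidX : iid_with_law P X pbar.

Definition sample_tail (w : Omega) : n.-tuple T := [tuple X (lift ord0 i) w | i < n].

Definition head_tail (w : Omega) : T * n.-tuple T := (X ord0 w, sample_tail w).

Lemma measurable_sample_tail : measurable_fun setT sample_tail.
Proof.
apply/measurable_fun_tnthP => i; rewrite /comp.
under eq_fun do rewrite tnth_mktuple.
exact: iidX.1.
Qed.

HB.instance Definition _ := isMeasurableFun.Build _ _ _ _ _ measurable_sample_tail.

Lemma measurable_head_tail : measurable_fun setT head_tail.
Proof. exact: measurable_fun_pair (iidX.1 ord0) measurable_sample_tail. Qed.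

HB.instance Definition _ := isMeasurableFun.Build _ _ _ _ _ measurable_head_tail.

Lemma cons_sample_tail (x : T) (w : Omega) :
  tnth [tuple of x :: sample_tail w] = sample_with_first X x w.
Proof.
apply/funext => j; rewrite /sample_with_first.
case: (unliftP ord0 j) => [i ->|->]; last by rewrite tnth0 eqxx.
by rewrite tnthS tnth_mktuple eq_sym (negbTE (neq_lift _ _)).
Qed.

Lemma prob_head_tail_box (B : set T) (Bs : 'I_n -> set T) :
  measurable B -> (forall i, measurable (Bs i)) ->
  P (X ord0 @^-1` B `&`
     sample_tail @^-1` \bigcap_(i in [set: 'I_n]) ((fun s => tnth s i) @^-1` Bs i)) =
  (pbar B * \prod_(i < n) pbar (Bs i))%E.
Proof.
move=> mB mBs.
pose Bf j := if unlift ord0 j is Some i then Bs i else B.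
have mBf j : measurable (Bf j) by rewrite /Bf; case: (unlift _ _).
have := iidX.2 Bf mBf; rewrite big_ord_recl /Bf unlift_none.
under eq_bigr do rewrite liftK.
move=> <-; congr (P _); apply/seteqP; split => w /=.
  move=> [XB XBs] j _; case: unliftP => [i ->|->] //.
  by have := XBs i I; rewrite /= tnth_mktuple.
move=> XBf; split; first by have := XBf ord0 I; rewrite /Bf unlift_none.
by move=> i _; rewrite /preimage /= tnth_mktuple; have := XBf (lift ord0 i) I; rewrite /Bf liftK.
Qed.

Lemma prob_head_tail (B : set T) (D : set (n.-tuple T)) :
  measurable B -> measurable D ->
  P (X ord0 @^-1` B `&` sample_tail @^-1` D) = (pbar B * P (sample_tail @^-1` D))%E.
Proof.
move=> mB mD.
have mXB : measurable (X ord0 @^-1` B) by rewrite -[X in measurable X]setTI; exact: iidX.1.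
have pbarB : pbar B = (fine (pbar B))%:E by rewrite fineK // fin_num_measure.
pose mu := measure_function_pushforward__canonical__measure_function_Measure
  (mrestr P mXB) measurable_sample_tail.
pose nu := mscale (NngNum (fine_ge0 (measure_ge0 pbar B))) (distribution P sample_tail).
have coverT : \bigcup_(k : nat) (setT : set (n.-tuple T)) = setT.
  by apply/seteqP; split => // s _; exists 0%N.
rewrite setIC pbarB.
apply: (measure_unique _ (fun _ => setT) (@g_sigma_tuple_boxes _ T n)
  (@tuple_boxes_setI_closed _ T n) (fun _ => @tuple_boxesT _ T n) coverT mu nu _ _ D mD).
- move=> _ [Bs [mBs ->]].
  rewrite /= /mrestr /pushforward /mscale /distribution /pushforward /= -pbarB.
  rewrite setIC prob_head_tail_box // /distribution /pushforward /=.
  have := prob_head_tail_box measurableT mBs; rewrite preimage_setT setTI => ->.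
  by rewrite probability_setT mul1e.
- move=> _; rewrite /= /mrestr /pushforward /= preimage_setT setTI.
  by apply: (le_lt_trans (probability_le1 _ _)) => //; rewrite ltry.
Qed.

Lemma law_head_tail (Y : set (T * n.-tuple T)) : measurable Y ->
  (pbar \x distribution P sample_tail)%E Y = distribution P head_tail Y.
Proof.
move=> mY.
apply: (product_measure_unique (m2 := distribution P sample_tail)
  (m' := distribution P head_tail)) => // B D mB mD.
by rewrite /= /distribution /pushforward /= -prob_head_tail.
Qed.

Lemma integral_head_tail (F : T * n.-tuple T -> \bar R) (B : set T) :
  measurable_fun setT F -> (forall z, (0 <= F z)%E) -> measurable B ->
  (\int[P]_(w in X ord0 @^-1` B) F (head_tail w) =
   \int[pbar]_(x in B) \int[P]_w F (x, sample_tail w))%E.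
Proof.
move=> mF F0 mB.
have mBT : measurable (B `*` [set: n.-tuple T]) by exact: measurableX.
have head_tailB : head_tail @^-1` (B `*` setT) = X ord0 @^-1` B.
  by apply/seteqP; split => w /=; [case|split].
transitivity (\int[distribution P head_tail]_(z in B `*` setT) F z)%E.
  rewrite (ge0_integral_pushforward measurable_head_tail) ?head_tailB //.
  exact: measurable_funTS.
rewrite (eq_measure_integral (pbar \x distribution P sample_tail)%E); last first.
  by move=> Y mY _; exact/esym/law_head_tail.
have mFB : measurable_fun setT (F \_ (B `*` [set: n.-tuple T])).
  by apply/(measurable_restrictT _ mBT)/measurable_funTS.
have FB0 z : (0 <= (F \_ (B `*` [set: n.-tuple T])) z)%E.
  by rewrite patchE; case: ifPn.
rewrite integral_mkcond fubini_tonelli1 // [RHS]integral_mkcond.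
apply: eq_integral => x _; rewrite /fubini_F patchE; case: ifPn => xB.
  rewrite ge0_integral_distribution //; last exact: measurable_fun_pair2.
  apply: eq_integral => w _; rewrite /= patchE ifT //.
  by apply/mem_set; split => //; move/set_mem: xB.
apply: integral0_eq => s _; rewrite patchE ifF //.
by apply/negbTE/negP => /set_mem [xB' _]; move/negP: xB; apply; exact/mem_set.
Qed.

End head_tail_independence.

Theorem lemma2 (R : realType) (d : measure_display) (T : measurableType d)
  (pbar : probability T R) (r : T -> R) (n : nat)
  (A : R -> R -> T -> pprobability T R -> R)
  (dO : measure_display) (Omega : measurableType dO) (P : probability Omega R)
  (X : 'I_n.+1 -> Omega -> T) (C : 'I_n.+1 -> Omega -> bool) :
  measurable_fun setT r ->
  measurable_fun setT
    (fun z : R * R * T * pprobability T R => A z.1.1.1 z.1.1.2 z.1.2 z.2) ->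
  (forall a b x mu, 0 <= A a b x mu <= 1) ->
  (forall a a' b b' x mu, a <= a' -> b <= b' -> A a b x mu <= A a' b' x mu) ->
  iid_with_law P X pbar ->
  (forall i, measurable [set w | C i w]) ->
  (forall i (E : set Omega), sigmaX X E ->
     P (E `&` [set w | C i w]) =
     (\int[P]_(w in E) (accept_prob r A (fun j => X j w) (X i w))%:E)%E) ->
  (0 < P [set w | C ord0 w])%E ->
  (0 < \int[pbar]_x gfun P X r A x)%E /\
  forall B : set T, measurable B ->
    (P (X ord0 @^-1` B `&` [set w | C ord0 w]) / P [set w | C ord0 w])%E =
    ((\int[pbar]_(x in B) gfun P X r A x) / (\int[pbar]_x gfun P X r A x))%E.
Proof.
move=> mr mA A01 _ iidX _ PC PC0.
pose accept (z : T * n.-tuple T) := (accept_prob r A (tnth [tuple of z.1 :: z.2]) z.1)%:E.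
have maccept : measurable_fun setT accept.
  apply/measurable_EFinP; apply: measurable_accept_prob => // j.
  exact: measurableT_comp (measurable_tnth j) (measurable_cons measurable_fst measurable_snd).
have A_ge0 a b x mu : 0 <= A a b x mu by case/andP: (A01 a b x mu).
have accept_ge0 z : (0 <= accept z)%E by rewrite lee_fin A_ge0.
have joint B : measurable B ->
    P (X ord0 @^-1` B `&` [set w | C ord0 w]) = (\int[pbar]_(x in B) gfun P X r A x)%E.
  move=> mB; rewrite PC; last exact: sigmaX_preimage.
  transitivity (\int[P]_(w in X ord0 @^-1` B) accept (head_tail X w))%E.
    by apply: eq_integral => w _; rewrite /accept /= cons_sample_tail sample_with_first_head.
  rewrite (integral_head_tail iidX maccept accept_ge0 mB).
  by apply: eq_integral => x _; apply: eq_integral => w _; rewrite /accept /= cons_sample_tail.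
have total := joint setT measurableT; rewrite preimage_setT setTI in total.
split; first by rewrite -total.
by move=> B mB; rewrite joint // total.
Qed.
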